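(* For each $n\ge1$ and each $k\ge0$, the number of plane trees with $n$ edges and exactly $k$ young leaves equals the number of Dyck paths of length $2n$ with exactly $k$ peaks at even height (a peak $UD$ being at height $h$ if its top point has $y$-coordinate $h$).
   Context: A plane tree is a rooted tree in which the children of each vertex are linearly ordered (left to right). A leaf is a vertex with no children; by convention the tree consisting of a single vertex (no edges) has no leaves. A leaf is a young leaf if it is not the leftmost child of its parent. A Dyck path of length $2n$ is a lattice path from $(0,0)$ to $(2n,0)$ with steps $U=(1,1)$, $D=(1,-1)$ never going below the $x$-axis; a peak is an occurrence of consecutive steps $UD$. *)

From mathcomp Require Import all_boot.
Set Implicit Arguments. Unset Strict Implicit. Unset Printing Implicit Defensive.

Inductive ptree : Type := Node of seq ptree.

Definition children (t : ptree) : seq ptree := let: Node ts := t in ts.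

Fixpoint edges (t : ptree) : nat :=
  let: Node ts := t in sumn (map (fun u => (edges u).+1) ts).

Definition is_leaf_child (t : ptree) : bool := nilp (children t).

(* young leaves: leaves that are not the leftmost child of their parent.
   The root is never counted (it has no parent). *)
Fixpoint young_leaves (t : ptree) : nat :=
  let: Node ts := t in
  count is_leaf_child (behead ts) + sumn (map young_leaves ts).

(* Dyck paths as boolean words: true = U = (1,1), false = D = (1,-1). *)
Definition nU (s : seq bool) : nat := count id s.
Definition nD (s : seq bool) : nat := count negb s.

Definition dyck (s : seq bool) : bool :=
  all (fun i => nD (take i s) <= nU (take i s)) (iota 0 (size s).+1)
  && (nU s == nD s).

(* height reached after the first i steps (meaningful when nonnegative) *)
Definition height_after (s : seq bool) (i : nat) : nat :=
  nU (take i s) - nD (take i s).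

(* A peak is an occurrence of U at position i followed by D at position i+1;
   its height is the height of its top point, i.e. after i+1 steps. *)
Definition is_peak (s : seq bool) (i : nat) : bool :=
  (i.+1 < size s) && nth false s i && ~~ nth false s i.+1.

Definition even_peaks (s : seq bool) : nat :=
  count (fun i => is_peak s i && ~~ odd (height_after s i.+1)) (iota 0 (size s)).

From mathcomp Require Import all_boot zify.
From Stdlib Require Import ClassicalEpsilon ProofIrrelevance.

Set Implicit Arguments.
Unset Strict Implicit.
Unset Printing Implicit Defensive.

(* Encode a plane tree through its first-child/next-sibling decomposition: for
   a root with children [u :: us],
     C (u :: us) = U C' us D C u      and      C' (u :: us) = U C u D C' us,
   where C' treats the first child as if it had an older sibling.  The
   first-return decomposition of Dyck words shows that both codes are
   bijections from trees with n edges onto Dyck words of length 2n.  Every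
   code has even length, so the factors keep their abscissa parity, and in a
   Dyck word the height of a point has the parity of its abscissa.  A leaf u
   has C u = [::], and the resulting peak U D has even height exactly when u
   has an older sibling.  Hence the even-height peaks of C t count the young
   leaves of t. *)

Fixpoint dyck_from (h : nat) (s : seq bool) : bool :=
  match s with
  | [::] => h == 0
  | true :: r => dyck_from h.+1 r
  | false :: r => if h is h'.+1 then dyck_from h' r else false
  end.

Lemma nUD_size s : nU s + nD s = size s.
Proof. by elim: s => //= -[] s IH /=; lia. Qed.

Lemma dyck_fromE h s :
  dyck_from h s =
  all (fun i => nD (take i s) <= h + nU (take i s)) (iota 0 (size s).+1)
  && (h + nU s == nD s).
Proof.
elim: s h => [|x r IH] h; first by rewrite /= addn0.
have -> : iota 0 (size (x :: r)).+1 = 0 :: [seq 1 + i | i <- iota 0 (size r).+1].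
  by rewrite -(iotaDl 1 0).
have : 0 \in iota 0 (size r).+1 by rewrite mem_iota.
move: (iota 0 _) IH => I IH I0; rewrite /= all_map; case: x => /=.
  by rewrite IH addSnnS; congr (_ && _); apply: eq_all => i /=; rewrite addnS.
case: h => [|h] /=.
  apply/esym/negbTE/negP => /andP[+ _] => /allP/(_ 0 I0).
  by rewrite /= addn0 take0.
by rewrite IH.
Qed.

Lemma dyckE s : dyck s = dyck_from 0 s.
Proof. by rewrite dyck_fromE. Qed.

Lemma dyck_from_cat h m a c :
  dyck_from h a -> dyck_from m c -> dyck_from (h + m) (a ++ c).
Proof.
elim: a h => [|[] a IH] h /=; first by move/eqP->.
  exact: IH.
by case: h => // h; apply: IH.
Qed.

Lemma dyck_from_first_return h s : dyck_from h.+1 s ->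
  exists a b, [/\ s = a ++ false :: b, dyck_from 0 a & dyck_from h b].
Proof.
have [n] := ubnP (size s); elim: n s h => // n IH [|[] r] h //= lt_s_n.
  move=> /IH[|a1 [b1 [Er Ha1 Hb1]]]; first exact: lt_s_n.
  have /IH[|a2 [b2 [Eb1 Ha2 Hb2]]] := Hb1.
    by move: lt_s_n; rewrite Er size_cat /=; lia.
  exists (true :: a1 ++ false :: a2), b2; split => //.
    by rewrite Er Eb1 /= -catA.
  exact: (dyck_from_cat (m := 1) (c := false :: _) Ha1 Ha2).
by move=> Hr; exists [::], r.
Qed.

Lemma dyck_from_first_return_uniq h a a' c c' :
  dyck_from h a -> dyck_from h a' ->
  a ++ false :: c = a' ++ false :: c' -> a = a' /\ c = c'.
Proof.
elim: a a' h => [|x a IH] [|x' a'] h /=.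
- by move=> _ _ [].
- by move=> /eqP-> Ha' [] Ex; subst x'.
- by move=> Ha /eqP Eh [] Ex; subst x h.
move=> Ha Ha' [Ex E]; subst x'.
case: x Ha Ha' => [|]; last case: h => // h;
  by move=> Ha Ha'; have [-> ->] := IH _ _ Ha Ha' E.
Qed.

Lemma last_dyck_from h z s : dyck_from h s -> last z s = nilp s && z.
Proof.
elim: s h z => [|x [|y s] IH] h z //=; first by case: x; case: h.
by case: x => [|]; [exact: IH h.+1 z | case: h => // h; exact: IH h z].
Qed.

Lemma head_dyck s : dyck_from 0 s -> head true s.
Proof. by case: s => [|[]]. Qed.

Lemma dyck_prefix s i : dyck s -> nD (take i s) <= nU (take i s).
Proof.
case/andP=> /allP prefix_ok _; have [le_i_s | /ltnW lt_s_i] := leqP i (size s).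
  by apply: prefix_ok; rewrite mem_iota add0n ltnS le_i_s.
rewrite take_oversize //; have := prefix_ok (size s); rewrite take_size; apply.
by rewrite mem_iota add0n ltnS leqnn.
Qed.

Lemma odd_height_after s i : nD (take i s) <= nU (take i s) ->
  odd (height_after s i) = odd (size (take i s)).
Proof. by move=> le_DU; rewrite /height_after oddB // -oddD nUD_size. Qed.

(* [peaks_at b p s] counts the peaks of [p :: s] whose top lies at an even
   abscissa of [s] if [b], at an odd one otherwise. *)
Fixpoint peaks_at (b p : bool) (s : seq bool) : nat :=
  if s is x :: r then (p && ~~ x && b) + peaks_at (~~ b) x r else 0.

Lemma peaks_at_cat b p a c :
  peaks_at b p (a ++ c) = peaks_at b p a + peaks_at (b (+) odd (size a)) (last p a) c.
Proof.
elim: a b p => [|x a IH] b p /=; first by rewrite addbF.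
by rewrite IH addnA; case: b; case: (odd (size a)).
Qed.

Lemma peaks_atE b p s : peaks_at b p s =
  (p && ~~ head true s && b) + count (fun i => is_peak s i && (odd i == b)) (iota 0 (size s)).
Proof.
elim: s b p => [|x r IH] b p; first by case: p; case: b.
rewrite /= IH (iotaDl 1 0) count_map.
rewrite (@eq_count _ _ (fun i => is_peak r i && (odd i == ~~ b))); last first.
  by move=> i /=; rewrite add1n /is_peak /= ltnS; case: (odd i); case: b.
by congr (_ + (_ + _)); case: r {IH} => [|y r]; case: x; case: b.
Qed.

Lemma peaks_at_prev b p s : peaks_at b p s = peaks_at b false s + (p && ~~ head true s && b).
Proof. by rewrite !peaks_atE addnAC. Qed.

Lemma even_peaks_dyck s : dyck s -> even_peaks s = peaks_at true false s.
Proof.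
move=> dyck_s; rewrite peaks_atE add0n; apply: eq_count => i.
case peak_i: (is_peak s i) => //=; have /andP[/andP[lt_i_s _] _] := peak_i.
by rewrite odd_height_after ?dyck_prefix // size_take lt_i_s /=; case: (odd i).
Qed.

Fixpoint ptree_children_ind (P : ptree -> Prop) (P0 : P (Node [::]))
    (PS : forall u us, P u -> P (Node us) -> P (Node (u :: us))) (t : ptree) : P t :=
  let: Node ts := t in
  (fix forest_ind ts : P (Node ts) :=
     if ts is u :: us then PS u us (@ptree_children_ind P P0 PS u) (forest_ind us) else P0) ts.

Definition sib_young_leaves (t : ptree) : nat :=
  count is_leaf_child (children t) + sumn (map young_leaves (children t)).

Lemma young_leaves_cons u us :
  young_leaves (Node (u :: us)) = young_leaves u + sib_young_leaves (Node us).
Proof. by rewrite /sib_young_leaves /=; lia. Qed.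

Lemma sib_young_leaves_cons u us : sib_young_leaves (Node (u :: us)) =
  is_leaf_child u + young_leaves u + sib_young_leaves (Node us).
Proof. by rewrite /sib_young_leaves /=; lia. Qed.

Lemma edges_cons u us : edges (Node (u :: us)) = (edges u).+1 + edges (Node us).
Proof. by []. Qed.

(* [sib_code t] codes the children of [t] as if the first of them had an older
   sibling, so that all its leaf children count, see [sib_young_leaves]. *)
Fixpoint tree_codes (t : ptree) : seq bool * seq bool :=
  let: Node ts := t in
  (fix forest_codes ts :=
     if ts is u :: us then
       let c' := (forest_codes us).2 in
       let d := (tree_codes u).1 in
       (true :: c' ++ false :: d, true :: d ++ false :: c')
     else ([::], [::])) ts.

Definition tree_code (t : ptree) : seq bool := (tree_codes t).1.
Definition sib_code (t : ptree) : seq bool := (tree_codes t).2.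

Lemma tree_code_cons u us :
  tree_code (Node (u :: us)) = true :: sib_code (Node us) ++ false :: tree_code u.
Proof. by []. Qed.

Lemma sib_code_cons u us :
  sib_code (Node (u :: us)) = true :: tree_code u ++ false :: sib_code (Node us).
Proof. by []. Qed.

Lemma size_codes t :
  size (tree_code t) = (edges t).*2 /\ size (sib_code t) = (edges t).*2.
Proof.
have size_UD a b : size (true :: a ++ false :: b) = (size a + size b).+2.
  by rewrite /= size_cat /= addnS.
elim/ptree_children_ind: t => // u us [Su _] [_ Sus].
rewrite tree_code_cons sib_code_cons !size_UD Su Sus edges_cons doubleD doubleS.
by split; lia.
Qed.

Lemma dyck_codes t : dyck_from 0 (tree_code t) /\ dyck_from 0 (sib_code t).
Proof.
elim/ptree_children_ind: t => // u us [Du _] [_ Dus].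
rewrite tree_code_cons sib_code_cons; split.
- exact: (dyck_from_cat (m := 1) (c := false :: _) Dus Du).
- exact: (dyck_from_cat (m := 1) (c := false :: _) Du Dus).
Qed.

Lemma nilp_tree_code t : nilp (tree_code t) = is_leaf_child t.
Proof. by case: t => -[|u us]; rewrite ?tree_code_cons. Qed.

Lemma peaks_codes t : peaks_at true false (tree_code t) = young_leaves t
  /\ peaks_at false false (sib_code t) = sib_young_leaves t.
Proof.
elim/ptree_children_ind: t => // u us [Pu _] [_ Pus].
have [[Su _] [_ Sus]] := (size_codes u, size_codes (Node us)).
have [[Du _] [_ Dus]] := (dyck_codes u, dyck_codes (Node us)).
rewrite tree_code_cons sib_code_cons young_leaves_cons sib_young_leaves_cons.
rewrite /= !peaks_at_cat Su Sus !odd_double /= !(peaks_at_prev _ true) !head_dyck //.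
rewrite (last_dyck_from true Du) nilp_tree_code !andbF !andbT Pu Pus.
by split; lia.
Qed.

Lemma codes_inj t t' :
  (tree_code t = tree_code t' -> t = t') /\ (sib_code t = sib_code t' -> t = t').
Proof.
elim/ptree_children_ind: t t' => [|u us IHu IHus] [[|u' us']] //;
  rewrite ?tree_code_cons ?sib_code_cons //.
have [[Du _] [_ Dus]] := (dyck_codes u, dyck_codes (Node us)).
have [[Du' _] [_ Dus']] := (dyck_codes u', dyck_codes (Node us')).
split=> -[] E.
- by have [/(IHus (Node us')).2 [->] /(IHu u').1 ->] :=
    dyck_from_first_return_uniq Dus Dus' E.
- by have [/(IHu u').1 -> /(IHus (Node us')).2 [->]] :=
    dyck_from_first_return_uniq Du Du' E.
Qed.

Lemma codes_onto s :
  dyck_from 0 s -> (exists t, tree_code t = s) /\ (exists t, sib_code t = s).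
Proof.
have [n] := ubnP (size s); elim: n s => // n IH [|[] r] //= lt_s_n.
  by split; exists (Node [::]).
move=> /dyck_from_first_return[a [b [Er Da Db]]].
have [lt_a_n lt_b_n] : size a < n /\ size b < n.
  by move: lt_s_n; rewrite Er size_cat /=; lia.
have [[ta Ta] [[ua] Ua]] := IH a lt_a_n Da.
have [[tb Tb] [[ub] Ub]] := IH b lt_b_n Db.
split; [exists (Node (tb :: ua)) | exists (Node (ta :: ub))].
- by rewrite tree_code_cons Ua Tb Er.
- by rewrite sib_code_cons Ta Ub Er.
Qed.

Lemma sig_bijective (A B : Type) (P : A -> Prop) (Q : B -> Prop) (h : A -> B) :
  (forall a, P a -> Q (h a)) -> injective h ->
  (forall b, Q b -> exists a, P a /\ h a = b) ->
  exists f : {a | P a} -> {b | Q b}, bijective f.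
Proof.
move=> hPQ h_inj h_onto.
have sig_inj (T : Type) (R : T -> Prop) (x y : {z | R z}) : sval x = sval y -> x = y.
  exact: eq_sig_hprop (fun z => @proof_irrelevance (R z)) x y.
pose pre y := constructive_indefinite_description _ (h_onto _ (svalP y)).
exists (fun x => exist Q (h (sval x)) (hPQ _ (svalP x))).
exists (fun y => exist P (sval (pre y)) (proj1 (svalP (pre y)))).
- by move=> x; apply: sig_inj; apply: h_inj; case: (svalP (pre _)).
- by move=> y; apply: sig_inj; case: (svalP (pre y)).
Qed.

Lemma tree_code_spec t : [/\ dyck (tree_code t), size (tree_code t) = (edges t).*2
  & even_peaks (tree_code t) = young_leaves t].
Proof.
have [Dt _] := dyck_codes t; have [St _] := size_codes t; have [Pt _] := peaks_codes t.
by rewrite dyckE even_peaks_dyck ?dyckE.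
Qed.

Theorem mainTheorem7 (n k : nat) : 1 <= n ->
  exists f : {t : ptree | edges t = n /\ young_leaves t = k} ->
             {s : seq bool | [/\ dyck s, size s = n.*2 & even_peaks s = k]},
    bijective f.
Proof.
move=> _; apply: sig_bijective.
- by move=> t [<- <-]; apply: tree_code_spec.
- by move=> t t' /(codes_inj t t').1.
move=> s [dyck_s size_s peaks_s].
rewrite dyckE in dyck_s; have [[t Tt] _] := codes_onto dyck_s.
have [_ size_t peaks_t] := tree_code_spec t.
rewrite Tt in size_t peaks_t; exists t; split => //; split.
- by apply: double_inj; rewrite -size_t.
- by rewrite -peaks_t.
Qed.
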